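(* Let $D$ be a square-free integer, let $\mathbb{Z}[\sqrt{D}]$ denote the ring of integers of $\mathbb{Q}(\sqrt{D})$, and let $p$ be a prime integer which is irreducible but not prime in $\mathbb{Z}[\sqrt{D}]$. For any $z\in\mathbb{Z}[\sqrt{D}]$, we have $z\in I_p(D)$ if and only if the ideal $\langle p,z\rangle$ of $\mathbb{Z}[\sqrt{D}]$ is non-principal.
   Context: Here $\mathbb{Z}[\sqrt{D}]=\{a+b\sqrt{D}:a,b\in\mathbb{Z}\}$ if $D\equiv 2,3 \pmod 4$ and $\mathbb{Z}[\sqrt{D}]=\{\frac{a+b\sqrt{D}}{2}:a,b\in\mathbb{Z},\ a\equiv b \pmod 2\}$ if $D\equiv 1\pmod 4$. $\langle a_1,\dots,a_k\rangle$ denotes the ideal generated by $a_1,\dots,a_k$. $I_p(D)$ is the set of all non-unit $z\in\mathbb{Z}[\sqrt{D}]$ such that $z\notin\langle p\rangle$ but there exists $m\in\mathbb{Z}[\sqrt{D}]$ with $m\notin\langle p\rangle$ and $zm\in\langle p\rangle$. *)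

From mathcomp Require Import all_boot all_order all_algebra.
Set Implicit Arguments. Unset Strict Implicit. Unset Printing Implicit Defensive.
Import Order.TTheory GRing.Theory Num.Theory.
Local Open Scope ring_scope.

(* Elements of the ring of integers of Q(sqrt D) are encoded as pairs (a, b)
   of integers standing for (a + b sqrt D)/2, subject to:
   - a = b (mod 2)        if D = 1 (mod 4);
   - a and b both even    if D = 2, 3 (mod 4)  (i.e. the element a/2 + (b/2) sqrt D). *)
Definition elt := (int * int)%type.

Definition inO (D : int) (x : elt) : bool :=
  if (D %% 4)%Z == 1 then ((x.1 - x.2) %% 2)%Z == 0
  else ((2 %| x.1)%Z && (2 %| x.2)%Z).

(* ((a + b sqrt D)/2) * ((c + d sqrt D)/2)
     = ((ac + bdD)/2 + ((ad + bc)/2) sqrt D) / 2 ; divisions exact on inO. *)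
Definition mulO (D : int) (x y : elt) : elt :=
  (((x.1 * y.1 + x.2 * y.2 * D) %/ 2)%Z, ((x.1 * y.2 + x.2 * y.1) %/ 2)%Z).
Definition addO (x y : elt) : elt := (x.1 + y.1, x.2 + y.2).
Definition zeroO : elt := (0, 0).
Definition oneO : elt := (2, 0).
Definition intO (n : int) : elt := (2 * n, 0).

Definition squarefree (D : int) : Prop :=
  forall d : nat, (d * d %| `|D|)%N -> d = 1%N.

Definition unitO (D : int) (u : elt) : Prop :=
  inO D u /\ exists v, inO D v /\ mulO D u v = oneO.

Definition dvdO (D : int) (x y : elt) : Prop :=
  exists k, inO D k /\ y = mulO D x k.

Definition irreducibleO (D : int) (p : elt) : Prop :=
  inO D p /\ p <> zeroO /\ ~ unitO D p /\
  forall a b, inO D a -> inO D b -> p = mulO D a b -> unitO D a \/ unitO D b.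

Definition primeO (D : int) (p : elt) : Prop :=
  inO D p /\ p <> zeroO /\ ~ unitO D p /\
  forall a b, inO D a -> inO D b -> dvdO D p (mulO D a b) -> dvdO D p a \/ dvdO D p b.

Definition ideal2 (D : int) (x y : elt) (w : elt) : Prop :=
  exists r s, inO D r /\ inO D s /\ w = addO (mulO D r x) (mulO D s y).

Definition principalO (D : int) (I : elt -> Prop) : Prop :=
  exists g, inO D g /\ forall w, inO D w -> (I w <-> dvdO D g w).

Definition Ip (D : int) (p : elt) (z : elt) : Prop :=
  inO D z /\ ~ unitO D z /\ ~ dvdO D p z /\
  exists m, inO D m /\ ~ dvdO D p m /\ dvdO D p (mulO D z m).

From HB Require Import structures.
From mathcomp Require Import all_boot all_order all_algebra zify ring.
Import GRing.Theory.
Set Implicit Arguments. Unset Strict Implicit. Unset Printing Implicit Defensive.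
Local Open Scope ring_scope.

(* If <p, z> = <g>, then p = g k with p irreducible.  If g is a unit then
   1 = r p + s z, so p | z m forces p | m; if k is a unit then p | z.  Conversely,
   if <p, z> is not principal, z is neither a unit nor a multiple of p, and p
   divides the norm N = z z' (z' the conjugate of z), since otherwise a Bezout
   relation u p + v N = 1 puts 1 in <p, z>.  Thus p | z z' while p does not divide
   z', because conjugation fixes p. *)

Section TwoGeneratedIdeals.
Variable R : comNzRingType.
Implicit Types a b g m p w x y z : R.

Definition divides x y := exists k, y = x * k.
Definition invertible x := exists v, x * v = 1.
Definition irreducible_elt p :=
  ~ invertible p /\ forall a b, p = a * b -> invertible a \/ invertible b.
Definition in_ideal2 x y w := exists r s, w = r * x + s * y.
Definition principal2 x y := exists g, forall w, in_ideal2 x y w <-> divides g w.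
Definition Ip_mem p z :=
  [/\ ~ invertible z, ~ divides p z & exists2 m, ~ divides p m & divides p (z * m)].

Lemma in_ideal2l x y : in_ideal2 x y x.
Proof. by exists 1, 0; rewrite mul1r mul0r addr0. Qed.

Lemma in_ideal2r x y : in_ideal2 x y y.
Proof. by exists 0, 1; rewrite mul1r mul0r add0r. Qed.

Lemma principal2_full x y : in_ideal2 x y 1 -> principal2 x y.
Proof.
move=> [r [s one_rs]]; exists 1 => w; split=> [_|_]; first by exists w; rewrite mul1r.
by exists (w * r), (w * s); rewrite -mulrA -mulrA -mulrDr -one_rs mulr1.
Qed.

Lemma principal2_dvd x y : divides x y -> principal2 x y.
Proof.
move=> [c ->]; exists x => w; split=> [[r [s ->]] | [k ->]].
  by exists (r + s * c); ring.
by exists k, 0; ring.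
Qed.

Lemma principal2_invertible x y : invertible y -> principal2 x y.
Proof. by move=> [v yv]; apply: principal2_full; exists 0, v; rewrite mul0r add0r mulrC. Qed.

Lemma divides_mulr_principal2 p z m :
  irreducible_elt p -> principal2 p z -> ~ divides p z ->
  divides p (z * m) -> divides p m.
Proof.
move=> [_ p_irr] [g gen] p_ndvd_z [c zm_pc].
have [k p_gk] := (gen p).1 (in_ideal2l p z).
have [t z_gt] := (gen z).1 (in_ideal2r p z).
have [r [s g_rs]] := (gen g).2 (ex_intro _ 1 (esym (mulr1 g))).
case: (p_irr _ _ p_gk) => [[v gv] | [v kv]].
  exists (v * (r * m + s * c)).
  rewrite -[m in LHS]mul1r -gv g_rs.
  transitivity (p * (v * r * m) + v * s * (z * m)); first by ring.
  by rewrite zm_pc; ring.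
by case: p_ndvd_z; exists (v * t); rewrite z_gt -[g]mulr1 -kv p_gk; ring.
Qed.

Lemma in_ideal2_one_coprime_norm (q N : int) z zb :
  z * zb = N%:~R -> coprimez q N -> in_ideal2 q%:~R z 1.
Proof.
move=> z_zb coqN; have [u [v]] := Bezoutz q N; rewrite (eqP coqN) => uv1.
exists u%:~R, (v%:~R * zb).
by rewrite -mulrA (mulrC zb) z_zb -!intrM -intrD uv1.
Qed.

Variable conj : {rmorphism R -> R}.
Hypothesis conjK : involutive conj.
Hypothesis mul_conj_int : forall x, exists N : int, x * conj x = N%:~R.

Lemma divides_conj x y : divides x (conj y) -> divides (conj x) y.
Proof. by move=> [k yk]; exists (conj k); rewrite -rmorphM -yk conjK. Qed.

Lemma Ip_mem_iff_nonprincipal2 (p : nat) z : prime p -> irreducible_elt p%:R ->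
  Ip_mem p%:R z <-> ~ principal2 p%:R z.
Proof.
move=> p_prime p_irr; split.
  move=> [_ p_ndvd_z [m p_ndvd_m p_dvd_zm]] pr.
  exact/p_ndvd_m/(divides_mulr_principal2 p_irr pr).
move=> npr; have p_ndvd_z : ~ divides p%:R z by move/principal2_dvd.
split=> //; first by move/(principal2_invertible p%:R).
have [N zN] := mul_conj_int z.
have [/dvdzP [c Npc] | p_ndvd_N] := boolP (p%:Z %| N)%Z.
  exists (conj z).
    by move/divides_conj; rewrite rmorph_nat.
  by exists c%:~R; rewrite zN Npc intrM mulrC.
have coprime_pN : coprimez p N by rewrite coprimezE prime_coprime -?dvdzE.
by case: npr; apply/principal2_full/(in_ideal2_one_coprime_norm zN coprime_pN).
Qed.

End TwoGeneratedIdeals.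

Section QuadraticIntegers.
Variable D : int.
Implicit Types x y z : elt.

Lemma inO_D1 x : (D %% 4)%Z = 1 -> inO D x <-> exists s, x.1 = x.2 + s * 2.
Proof.
rewrite /inO => ->; rewrite eqxx; split=> [/eqP x12 | [s ->]].
  by exists ((x.1 - x.2) %/ 2)%Z; have := divz_eq (x.1 - x.2) 2; rewrite x12; lia.
by rewrite addrAC subrr add0r modzMl.
Qed.

Lemma inO_D23 x : (D %% 4)%Z != 1 -> inO D x <-> exists a b, x = (a * 2, b * 2).
Proof.
rewrite /inO => /negPf ->; split=> [/andP [/dvdzP [a xa] /dvdzP [b xb]] | [a [b ->]]].
  by exists a, b; rewrite -xa -xb; case: x {xa xb}.
by rewrite /= !dvdz_mull.
Qed.

Lemma D1_form : (D %% 4)%Z = 1 -> exists k, D = k * 4 + 1.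
Proof. by move=> D1; exists (D %/ 4)%Z; have := divz_eq D 4; rewrite D1. Qed.

Lemma inO_add x y : inO D x -> inO D y -> inO D (addO x y).
Proof.
have [D1 | D23] := eqVneq (D %% 4)%Z 1.
  rewrite !inO_D1 // => -[s xs] [t yt]; exists (s + t); rewrite /= xs yt; ring.
rewrite !inO_D23 // => -[a [b ->]] [c [d ->]].
by exists (a + c), (b + d); rewrite /addO /=; congr pair; ring.
Qed.

Lemma inO_opp x : inO D x -> inO D (- x.1, - x.2).
Proof.
have [D1 | D23] := eqVneq (D %% 4)%Z 1.
  rewrite !inO_D1 // => -[s xs]; exists (- s); rewrite /= xs; ring.
rewrite !inO_D23 // => -[a [b ->]].
by exists (- a), (- b); rewrite /=; congr pair; ring.
Qed.

Lemma inO_conj x : inO D x -> inO D (x.1, - x.2).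
Proof.
have [D1 | D23] := eqVneq (D %% 4)%Z 1.
  rewrite !inO_D1 // => -[s xs]; exists (s + x.2); rewrite /= xs; ring.
rewrite !inO_D23 // => -[a [b ->]].
by exists a, (- b); rewrite /=; congr pair; ring.
Qed.

Lemma inO_int n : inO D (intO n).
Proof.
have [D1 | D23] := eqVneq (D %% 4)%Z 1.
  by rewrite inO_D1 //; exists n; rewrite /= add0r mulrC.
by rewrite inO_D23 //; exists n, 0; rewrite /intO mulrC.
Qed.

Lemma inO_int_part a : inO D (a, 0) -> exists n, (a, 0) = intO n.
Proof.
have [D1 | D23] := eqVneq (D %% 4)%Z 1.
  by rewrite inO_D1 // => -[s /= ->]; exists s; rewrite add0r mulrC.
by rewrite inO_D23 // => -[n [b [-> _]]]; exists n; rewrite mulrC.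
Qed.

Lemma mulO_double x y : inO D x -> inO D y ->
  2 * (mulO D x y).1 = x.1 * y.1 + x.2 * y.2 * D /\
  2 * (mulO D x y).2 = x.1 * y.2 + x.2 * y.1.
Proof.
move=> xO yO.
suff [even1 even2] : (2 %| x.1 * y.1 + x.2 * y.2 * D)%Z /\ (2 %| x.1 * y.2 + x.2 * y.1)%Z.
  by rewrite /= ![2 * _]mulrC !divzK.
move: xO yO; have [D1 | D23] := eqVneq (D %% 4)%Z 1.
  rewrite !inO_D1 // => -[s ->] [t ->]; have [k ->] := D1_form D1.
  by split; apply/dvdzP; [exists (x.2 * y.2 + x.2 * t + s * y.2 + 2 * s * t
    + 2 * k * x.2 * y.2) | exists (x.2 * y.2 + s * y.2 + x.2 * t)]; ring.
rewrite !inO_D23 // => -[a [b ->]] [c [d ->]].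
by split; apply/dvdzP; [exists (2 * a * c + 2 * b * d * D) | exists (2 * a * d + 2 * b * c)];
  rewrite /=; ring.
Qed.

Lemma inO_mul x y : inO D x -> inO D y -> inO D (mulO D x y).
Proof.
move=> xO yO; have [] := mulO_double xO yO; case: (mulO D x y) => e f /= e2 f2.
move: xO yO; have [D1 | D23] := eqVneq (D %% 4)%Z 1.
  rewrite !inO_D1 // => -[s x1] [t y1]; have [k Dk] := D1_form D1.
  exists (s * t + k * x.2 * y.2); rewrite /=; rewrite x1 y1 Dk in e2 f2; lia.
rewrite !inO_D23 // => -[a [b xab]] [c [d ycd]]; rewrite xab ycd /= in e2 f2.
by exists (a * c + b * d * D), (a * d + b * c); congr pair; lia.
Qed.

(* The halvings in mulO are exact on inO, so ring identities can be checked in rat. *)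
Lemma mulO_rat x y : inO D x -> inO D y ->
  (mulO D x y).1%:~R = (x.1%:~R * y.1%:~R + x.2%:~R * y.2%:~R * D%:~R) / 2 :> rat /\
  (mulO D x y).2%:~R = (x.1%:~R * y.2%:~R + x.2%:~R * y.1%:~R) / 2 :> rat.
Proof.
move=> xO yO; have [e2 f2] := mulO_double xO yO.
by split; [move: e2 | move: f2] => /(congr1 (intr : int -> rat));
  rewrite !(intrD, intrM) => <-; field.
Qed.

Lemma elt_rat_inj x y : x.1%:~R = y.1%:~R :> rat -> x.2%:~R = y.2%:~R :> rat -> x = y.
Proof. by case: x y => [a b] [c d] /= /intr_inj -> /intr_inj ->. Qed.

Lemma mulOC x y : mulO D x y = mulO D y x.
Proof. by rewrite /mulO; congr pair; congr (_ %/ _)%Z; ring. Qed.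

Lemma mul1O x : mulO D oneO x = x.
Proof. by case: x => a b; rewrite /mulO /= !mul0r !addr0 !mulKz. Qed.

Lemma mulOA x y z : inO D x -> inO D y -> inO D z ->
  mulO D x (mulO D y z) = mulO D (mulO D x y) z.
Proof.
move=> xO yO zO; have [xy1 xy2] := mulO_rat xO yO; have [yz1 yz2] := mulO_rat yO zO.
have [l1 l2] := mulO_rat xO (inO_mul yO zO).
have [r1 r2] := mulO_rat (inO_mul xO yO) zO.
by apply: elt_rat_inj; rewrite ?(l1, l2, r1, r2) ?(xy1, xy2, yz1, yz2); field.
Qed.

Lemma mulODl x y z : inO D x -> inO D y -> inO D z ->
  mulO D (addO x y) z = addO (mulO D x z) (mulO D y z).
Proof.
move=> xO yO zO; have [xz1 xz2] := mulO_rat xO zO; have [yz1 yz2] := mulO_rat yO zO.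
have [l1 l2] := mulO_rat (inO_add xO yO) zO.
by apply: elt_rat_inj; rewrite ?(l1, l2) /= !intrD ?(xz1, xz2, yz1, yz2); field.
Qed.

Lemma mulO_conj x y : inO D x -> inO D y ->
  ((mulO D x y).1, - (mulO D x y).2) = mulO D (x.1, - x.2) (y.1, - y.2).
Proof.
move=> xO yO; have [xy1 xy2] := mulO_rat xO yO.
have [c1 c2] := mulO_rat (inO_conj xO) (inO_conj yO).
by apply: elt_rat_inj; rewrite /= ?intrN ?(xy1, xy2, c1, c2) /= ?intrN; field.
Qed.

End QuadraticIntegers.

Definition quadint (D : int) := {x : elt | inO D x}.
HB.instance Definition _ D := Choice.on (quadint D).

Section QuadintRing.
Variable D : int.
Implicit Types a b c : quadint D.

Definition qzero : quadint D := exist _ zeroO (inO_int D 0).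
Definition qadd a b : quadint D := exist _ (addO (val a) (val b)) (inO_add (valP a) (valP b)).
Definition qopp a : quadint D := exist _ (- (val a).1, - (val a).2) (inO_opp (valP a)).
Definition qone : quadint D := exist _ oneO (inO_int D 1).
Definition qmul a b : quadint D := exist _ (mulO D (val a) (val b)) (inO_mul (valP a) (valP b)).

Lemma qaddA : associative qadd.
Proof. by move=> a b c; apply: val_inj; rewrite /= /addO /= !addrA. Qed.
Lemma qaddC : commutative qadd.
Proof. by move=> a b; apply: val_inj; rewrite /= /addO /= addrC [_.2 + _]addrC. Qed.
Lemma qadd0 : left_id qzero qadd.
Proof. by move=> [[u v] ?]; apply: val_inj; rewrite /= /addO /= !add0r. Qed.
Lemma qaddN : left_inverse qzero qopp qadd.
Proof. by move=> a; apply: val_inj; rewrite /= /addO /= !addNr. Qed.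

HB.instance Definition _ := GRing.isZmodule.Build (quadint D) qaddA qaddC qadd0 qaddN.

Lemma qmulA : associative qmul.
Proof. by move=> a b c; apply: val_inj; rewrite /= mulOA //; apply: valP. Qed.
Lemma qmulC : commutative qmul.
Proof. by move=> a b; apply: val_inj; rewrite /= mulOC. Qed.
Lemma qmul1 : left_id qone qmul.
Proof. by move=> a; apply: val_inj; rewrite /= mul1O. Qed.
Lemma qmulDl : left_distributive qmul qadd.
Proof. by move=> a b c; apply: val_inj; rewrite /= mulODl //; apply: valP. Qed.
Lemma qone_neq0 : qone != qzero.
Proof. by apply/eqP => /(congr1 val). Qed.

HB.instance Definition _ :=
  GRing.Zmodule_isComNzRing.Build (quadint D) qmulA qmulC qmul1 qmulDl qone_neq0.

End QuadintRing.

Section QuadintConjugation.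
Variable D : int.
Implicit Types a b : quadint D.

Definition qconj a : quadint D := exist _ ((val a).1, - (val a).2) (inO_conj (valP a)).

Lemma qconjB : zmod_morphism qconj.
Proof. by move=> a b; apply: val_inj; rewrite /= opprD. Qed.

Lemma qconj_monoid : monoid_morphism qconj.
Proof.
split; first by apply: val_inj; rewrite /= oppr0.
by move=> a b; apply: val_inj; rewrite /= mulO_conj //; apply: valP.
Qed.

HB.instance Definition _ := GRing.isZmodMorphism.Build _ _ qconj qconjB.
HB.instance Definition _ := GRing.isMonoidMorphism.Build _ _ qconj qconj_monoid.

Lemma qconjK : involutive qconj.
Proof. by move=> a; apply: val_inj; rewrite /= opprK; case: (val a). Qed.

Lemma val_intr (n : int) : val (n%:~R : quadint D) = intO n.
Proof.
have val_nat k : val (k%:R : quadint D) = intO k.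
  by elim: k => [|k IHk]; rewrite ?mulrS /= ?IHk /addO /intO /=; congr pair; lia.
by case: n => k; rewrite ?NegzE ?mulrNz /= val_nat /intO /=; congr pair; lia.
Qed.

Lemma mul_qconj_int a : exists N : int, a * qconj a = N%:~R.
Proof.
have im0 : (val (a * qconj a)).2 = 0.
  by rewrite /= mulrN [(val a).2 * _]mulrC addNr div0z.
have := valP (a * qconj a); rewrite [val _]surjective_pairing im0.
by move=> /inO_int_part [N aaN]; exists N; apply: val_inj;
  rewrite val_intr -aaN [LHS]surjective_pairing im0.
Qed.

End QuadintConjugation.

Section Translation.
Variable D : int.
Implicit Types p x y z w : quadint D.

Lemma dvdO_divides x y : dvdO D (val x) (val y) <-> divides x y.
Proof.
split=> [[k [kO yk]] | [k ->]]; first by exists (exist _ k kO); apply: val_inj.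
by exists (val k); split; first exact: valP.
Qed.

Lemma unitO_invertible x : unitO D (val x) <-> invertible x.
Proof.
split=> [[_ [v [vO xv]]] | [v xv]]; first by exists (exist _ v vO); apply: val_inj.
split; first exact: valP.
by exists (val v); split; [exact: valP | rewrite -[LHS]/(val (x * v)) xv].
Qed.

Lemma irreducibleO_irreducible x : irreducibleO D (val x) -> irreducible_elt x.
Proof.
move=> [_ [_ [x_nunit x_irr]]]; split; first by rewrite -unitO_invertible.
move=> a b xab; rewrite -!unitO_invertible.
exact: x_irr (valP a) (valP b) (congr1 val xab).
Qed.

Lemma ideal2_in_ideal2 x y w : ideal2 D (val x) (val y) (val w) <-> in_ideal2 x y w.
Proof.
split=> [[r [s [rO [sO wrs]]]] | [r [s ->]]].
  by exists (exist _ r rO), (exist _ s sO); apply: val_inj.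
by exists (val r), (val s); split; [exact: valP | split; first exact: valP].
Qed.

Lemma principalO_principal2 x y :
  principalO D (ideal2 D (val x) (val y)) <-> principal2 x y.
Proof.
split=> [[g [gO gen]] | [g gen]].
  exists (exist _ g gO) => w.
  by rewrite -ideal2_in_ideal2 -(dvdO_divides (exist _ g gO)); apply: gen (valP w).
exists (val g); split=> [|w wO]; first exact: valP.
by have := gen (exist _ w wO); rewrite -ideal2_in_ideal2 -dvdO_divides.
Qed.

Lemma Ip_Ip_mem p z : Ip D (val p) (val z) <-> Ip_mem p z.
Proof.
rewrite /Ip /Ip_mem unitO_invertible dvdO_divides.
split=> [[_ [? [? [m [mO [? ?]]]]]] | [? ? [m ? ?]]].
  by split=> //; exists (exist _ m mO); rewrite -dvdO_divides.
split; first exact: valP.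
do 2!split=> //; exists (val m); split; first exact: valP.
by split; [rewrite dvdO_divides | apply/(dvdO_divides p (z * m))].
Qed.

End Translation.

Theorem proposition2p1 (D : int) (p : nat) :
  squarefree D -> D != 1 -> prime p ->
  irreducibleO D (intO p%:Z) -> ~ primeO D (intO p%:Z) ->
  forall z : elt, inO D z ->
    (Ip D (intO p%:Z) z <-> ~ principalO D (ideal2 D (intO p%:Z) z)).
Proof.
move=> _ _ p_prime + _ z zO.
rewrite -(val_intr D p) -[z]/(val (exist _ z zO : quadint D)).
rewrite Ip_Ip_mem principalO_principal2 => /irreducibleO_irreducible p_irr.
exact: Ip_mem_iff_nonprincipal2 (@qconjK D) (@mul_qconj_int D) _ _ p_prime p_irr.
Qed.
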